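(* Let $\mathbb{H}=\{z\in\mathbb{C}:\operatorname{Im}z>0\}$ and $p\ge1$. For all $z_1,z_2\in\mathbb{H}$, \[ b_{\mathbb{H},p}(z_1,z_2)\le\frac{|z_1-z_2|}{\max\{\operatorname{Im}(z_1),\operatorname{Im}(z_2)\}}. \]
   Context: For $z_1,z_2\in\mathbb{H}$ and $p\ge1$, $b_{\mathbb{H},p}(z_1,z_2)=\sup_{t\in\mathbb{R}}\frac{|z_1-z_2|}{\sqrt[p]{|z_1-t|^p+|t-z_2|^p}}$. *)

From Stdlib Require Import Reals.
From Coquelicot Require Import Coquelicot.
Open Scope R_scope.

Definition in_H (z : C) : Prop := 0 < Im z.

(* The quantity |z1-z2| / (|z1-t|^p + |t-z2|^p)^(1/p) for real t (t viewed in C).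
   For z1,z2 in H the denominator base is > 0, so Rpower is the usual p-th root. *)
Definition b_quot (p : R) (z1 z2 : C) (t : R) : R :=
  Cmod (z1 - z2)%C /
  Rpower (Rpower (Cmod (z1 - RtoC t)%C) p + Rpower (Cmod (RtoC t - z2)%C) p) (/ p).

Definition b_H (p : R) (z1 z2 : C) : Rbar :=
  Lub_Rbar (fun y => exists t : R, y = b_quot p z1 z2 t).

(* For real t the point t lies on the boundary of H, so |z1 - t| >= Im z1 and
   |t - z2| >= Im z2.  A p-th power mean (a^p + b^p)^(1/p) dominates max(a, b),
   so the denominator of the quotient defining b_{H,p} is at least
   max(Im z1, Im z2) for every t, and the bound passes to the supremum. *)

From Stdlib Require Import Reals Lra.
From Coquelicot Require Import Coquelicot.
Open Scope R_scope.

Lemma Rabs_Im_le_Cmod (z : C) : Rabs (Im z) <= Cmod z.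
Proof. exact (Rle_trans _ _ _ (Rmax_r _ _) (Rmax_Cmod z)). Qed.

Lemma Im_le_Cmod_sub_real (z : C) (t : R) : Im z <= Cmod (z - RtoC t).
Proof.
  eapply Rle_trans; [|apply Rabs_Im_le_Cmod].
  replace (Im (z - RtoC t)) with (Im z) by (destruct z; simpl; ring).
  apply Rle_abs.
Qed.

Lemma Im_le_Cmod_real_sub (z : C) (t : R) : Im z <= Cmod (RtoC t - z).
Proof.
  eapply Rle_trans; [|apply Rabs_Im_le_Cmod].
  replace (Im (RtoC t - z)) with (- Im z) by (destruct z; simpl; ring).
  rewrite Rabs_Ropp; apply Rle_abs.
Qed.

Lemma Rpower_gt0 (x y : R) : 0 < Rpower x y.
Proof. apply exp_pos. Qed.

Lemma le_Rpower_root_sum (a c p : R) :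
  0 < a -> 0 < p -> 0 <= c -> a <= Rpower (Rpower a p + c) (/ p).
Proof.
  intros ha hp hc.
  assert (root_pow : Rpower (Rpower a p) (/ p) = a).
  { rewrite Rpower_mult, Rinv_r by lra. now apply Rpower_1. }
  rewrite <- root_pow at 1.
  apply Rle_Rpower_l.
  - left; now apply Rinv_0_lt_compat.
  - split; [apply Rpower_gt0 | lra].
Qed.

Lemma Rmax_le_Rpower_root_sum (a b p : R) :
  0 < a -> 0 < b -> 0 < p -> Rmax a b <= Rpower (Rpower a p + Rpower b p) (/ p).
Proof.
  intros ha hb hp.
  pose proof (Rpower_gt0 a p); pose proof (Rpower_gt0 b p).
  apply Rmax_lub.
  - apply le_Rpower_root_sum; lra.
  - rewrite Rplus_comm; apply le_Rpower_root_sum; lra.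
Qed.

Lemma b_quot_le (p : R) (z1 z2 : C) (t : R) :
  0 < p -> in_H z1 -> in_H z2 ->
  b_quot p z1 z2 t <= Cmod (z1 - z2)%C / Rmax (Im z1) (Im z2).
Proof.
  unfold in_H, b_quot; intros hp h1 h2.
  pose proof (Im_le_Cmod_sub_real z1 t) as d1.
  pose proof (Im_le_Cmod_real_sub z2 t) as d2.
  apply Rmult_le_compat_l; [apply Cmod_ge_0|].
  apply Rinv_le_contravar.
  - eapply Rlt_le_trans; [exact h1 | apply Rmax_l].
  - eapply Rle_trans; [| apply Rmax_le_Rpower_root_sum; lra].
    apply Rmax_lub.
    + apply (Rle_trans _ _ _ d1), Rmax_l.
    + apply (Rle_trans _ _ _ d2), Rmax_r.
Qed.

Theorem proposition3p27 (p : R) (z1 z2 : C) :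
  1 <= p -> in_H z1 -> in_H z2 ->
  Rbar_le (b_H p z1 z2) (Finite (Cmod (z1 - z2)%C / Rmax (Im z1) (Im z2))).
Proof.
  intros hp h1 h2.
  apply (Lub_Rbar_correct (fun y => exists t : R, y = b_quot p z1 z2 t)).
  intros y [t ->].
  apply b_quot_le; auto; lra.
Qed.
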